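(* (Injectivity of the surface-aligned representation.) For $\mathbf{x}\in\mathbb{R}^3\setminus\mathbb{I}$ define $\mathcal{X}(\mathbf{x})=(\mathbf{s}_c,h)\in\mathbb{R}^4$, where $\mathbf{s}$ is the dispersed projection of $\mathbf{x}$ onto the posed mesh $\mathcal{M}$, $h$ is the signed height ($h=\|\mathbf{x}-\mathbf{s}\|$ if $\mathbf{x}$ is outside the region enclosed by $\mathcal{M}$, $h=-\|\mathbf{x}-\mathbf{s}\|$ if inside), and $\mathbf{s}_c$ is the point of the T-pose mesh $\mathcal{M}_c$ with the same face and the same barycentric coordinates as $\mathbf{s}$. Then the map $\mathbf{x}\mapsto\mathcal{X}(\mathbf{x})$ is injective on $\mathbb{R}^3\setminus\mathbb{I}$.
   Context: Let $\mathcal{M}$ be a triangle mesh in $\mathbb{R}^3$ that is watertight (closed, without self-intersections) and has no faces of zero area. Each face $T=(\mathbf{v}_1,\mathbf{v}_2,\mathbf{v}_3)$ has an outward unit face normal $\mathbf{n}_T$; each vertex $\mathbf{v}$ has a unit vertex normal $\mathbf{n}_{\mathbf{v}}$, and for every face $T$ and every vertex $\mathbf{v}$ of $T$, $\langle \mathbf{n}_{\mathbf{v}},\mathbf{n}_T\rangle>0$. $\mathcal{M}_c$ is a second watertight triangle mesh without zero-area faces having the same combinatorial structure (same faces, vertex indexing) as $\mathcal{M}$ but different vertex positions; for $\mathbf{s}=\sum_i\alpha_i\mathbf{v}_i$ in face $T$ of $\mathcal{M}$, $\mathbf{s}_c=\sum_i\alpha_i\mathbf{v}^c_i$ in the corresponding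 face of $\mathcal{M}_c$. Vertex normal alignment of a face $T$ with orientation $\sigma\in\{+1,-1\}$: put $\mathbf{m}_T=\sigma\mathbf{n}_T$; for each $i\in\{1,2,3\}$ let $j,k$ be the other two indices, $\mathbf{e}_1=\mathbf{v}_j-\mathbf{v}_i$, $\mathbf{e}_2=\mathbf{v}_k-\mathbf{v}_i$, $\mathbf{m}_i=\sigma\mathbf{n}_{\mathbf{v}_i}$, write the in-plane part $\mathbf{m}_i-\langle\mathbf{m}_i,\mathbf{m}_T\rangle\mathbf{m}_T=c_1\mathbf{e}_1+c_2\mathbf{e}_2$, and define the aligned normal $\hat{\mathbf{n}}^{T,\sigma}_i=(\mathbf{m}_i-\max(0,c_1)\mathbf{e}_1-\max(0,c_2)\mathbf{e}_2)/\|\mathbf{m}_i-\max(0,c_1)\mathbf{e}_1-\max(0,c_2)\mathbf{e}_2\|$. (Aligned normals depend on the face $T$, not only on the vertex.) Barycentric interpolated projection onto $T$ with orientation $\sigma$: for $\mathbf{x}$ with $l:=\langle\mathbf{x}-\mathbf{v}_1,\sigma\mathbf{n}_T\rangle\ge 0$, set $\mathbf{v}_i'=\mathbf{v}_i+\big(l/\langle\hat{\mathbf{n}}^{T,\sigma}_i,\sigma\mathbf{n}_T\rangle\big)\hat{\mathbf{n}}^{T,\sigma}_i$, forming the parallel triangle $T'=(\mathbf{v}_1',\mathbf{v}_2',\mathbf{v}_3')$ in the plane through $\mathbf{x}$ parallel to $T$. If $\mathbf{x}\in T'$, i.e. $\mathbf{x}=\sum_i\alpha_i\mathbf{v}_i'$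 with $\alpha_i\ge0$, $\sum_i\alpha_i=1$, the projection is $\mathbf{s}_T=\sum_i\alpha_i\mathbf{v}_i$. Dispersed projection of $\mathbf{x}$ (with $\sigma=+1$ if $\mathbf{x}$ is outside the region enclosed by $\mathcal{M}$ and $\sigma=-1$ if inside): (1) compute the nearest point $\tilde{\mathbf{s}}$ of $\mathcal{M}$ to $\mathbf{x}$; (2) let $\mathcal{T}$ be the set of faces containing $\tilde{\mathbf{s}}$; (3) apply vertex normal alignment with orientation $\sigma$ to each $T\in\mathcal{T}$; (4) discard those $T$ with $\mathbf{x}\notin T'$; (5) compute $\mathbf{s}_T$ for the remaining $T$; (6) let $\mathbf{s}$ be the $\mathbf{s}_T$ nearest to $\mathbf{x}$. It is assumed that for every $\mathbf{x}\in\mathbb{R}^3$ at least one face survives step (4), so $\mathbf{s}$ is defined. Exceptional set: for a face $T$, orientation $\sigma$, and $\mathbf{a}^{T,\sigma}_i=\hat{\mathbf{n}}^{T,\sigma}_i/\langle\hat{\mathbf{n}}^{T,\sigma}_i,\sigma\mathbf{n}_T\rangle$, let $\mathbb{I}$ be the union over all faces $T$, both $\sigma$, and all pairs of distinct vertices $\mathbf{v}_i,\mathbf{v}_j$ of $T$ of the bilinear surfaces $\{(1-u)\mathbf{v}_i+u\mathbf{v}_j+t((1-u)\mathbf{a}^{T,\sigma}_i+u\mathbf{a}^{T,\sigma}_j): u\in[0,1],t\ge0\}$ (a set of Lebesgue measure zero). For $\mathbf{x}\notin\mathbb{I}$, the dispersed projection $\mathbf{s}$ lies in the relative interior of a face.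 *)

From Stdlib Require Import Reals Lra List.
Open Scope R_scope.

Record R3 := mkR3 { px : R; py : R; pz : R }.

Definition vadd (u v : R3) : R3 := mkR3 (px u + px v) (py u + py v) (pz u + pz v).
Definition vsub (u v : R3) : R3 := mkR3 (px u - px v) (py u - py v) (pz u - pz v).
Definition vscale (a : R) (u : R3) : R3 := mkR3 (a * px u) (a * py u) (a * pz u).
Definition dot (u v : R3) : R := px u * px v + py u * py v + pz u * pz v.
Definition cross (u v : R3) : R3 :=
  mkR3 (py u * pz v - pz u * py v) (pz u * px v - px u * pz v) (px u * py v - py u * px v).
Definition vnorm (u : R3) : R := sqrt (dot u u).

Definition bary3 := (R * R * R)%type.
Definition b1 (a : bary3) : R := fst (fst a).
Definition b2 (a : bary3) : R := snd (fst a).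
Definition b3 (a : bary3) : R := snd a.
Definition is_bary (a : bary3) : Prop :=
  0 <= b1 a /\ 0 <= b2 a /\ 0 <= b3 a /\ b1 a + b2 a + b3 a = 1.
Definition comb3 (p q r : R3) (a : bary3) : R3 :=
  vadd (vadd (vscale (b1 a) p) (vscale (b2 a) q)) (vscale (b3 a) r).

(* The posed mesh M and
   the T-pose mesh M_c share the face list F and differ in their positions. *)
Definition face := (nat * nat * nat)%type.
Definition fvert (T : face) (i : nat) : nat :=
  match i with 0 => fst (fst T) | 1 => snd (fst T) | _ => snd T end.
Definition fpos (V : nat -> R3) (T : face) (i : nat) : R3 := V (fvert T i).

Definition bary_point (V : nat -> R3) (T : face) (a : bary3) : R3 :=
  comb3 (fpos V T 0) (fpos V T 1) (fpos V T 2) a.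

Definition in_face (V : nat -> R3) (T : face) (x : R3) : Prop :=
  exists a, is_bary a /\ x = bary_point V T a.

Definition on_mesh (V : nat -> R3) (F : list face) (x : R3) : Prop :=
  exists T, In T F /\ in_face V T x.

Definition nondegenerate (V : nat -> R3) (T : face) : Prop :=
  vnorm (cross (vsub (fpos V T 1) (fpos V T 0)) (vsub (fpos V T 2) (fpos V T 0))) > 0.

(* unit face normal (faces are oriented; outwardness is a separate hypothesis) *)
Definition fnormal (V : nat -> R3) (T : face) : R3 :=
  let c := cross (vsub (fpos V T 1) (fpos V T 0)) (vsub (fpos V T 2) (fpos V T 0)) in
  vscale (/ vnorm c) c.

Definition has_vertex (T : face) (n : nat) : bool :=
  (Nat.eqb (fvert T 0) n || Nat.eqb (fvert T 1) n || Nat.eqb (fvert T 2) n)%bool.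
Definition has_edge (T : face) (m n : nat) : bool :=
  (has_vertex T m && has_vertex T n)%bool.

Definition closed_mesh (F : list face) : Prop :=
  forall T, In T F -> forall i, (i < 3)%nat ->
    length (filter (fun T' => has_edge T' (fvert T i) (fvert T ((i + 1) mod 3))) F) = 2%nat.

Definition distinct_faces (F : list face) : Prop :=
  forall k1 k2, (k1 < length F)%nat -> (k2 < length F)%nat -> k1 <> k2 ->
    ~ (forall n, has_vertex (nth k1 F (0,0,0)%nat) n = has_vertex (nth k2 F (0,0,0)%nat) n).

(* no self-intersections: two distinct faces meet only in the convex hull of
   their common vertices (empty if there is none) *)
Definition no_self_intersection (V : nat -> R3) (F : list face) : Prop :=
  forall k1 k2, (k1 < length F)%nat -> (k2 < length F)%nat -> k1 <> k2 ->
    let T1 := nth k1 F (0,0,0)%nat in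
    let T2 := nth k2 F (0,0,0)%nat in
    forall x, in_face V T1 x -> in_face V T2 x ->
      exists a, is_bary a /\ x = bary_point V T1 a /\
        (has_vertex T2 (fvert T1 0) = false -> b1 a = 0) /\
        (has_vertex T2 (fvert T1 1) = false -> b2 a = 0) /\
        (has_vertex T2 (fvert T1 2) = false -> b3 a = 0).

Definition watertight (V : nat -> R3) (F : list face) : Prop :=
  closed_mesh F /\ distinct_faces F /\ no_self_intersection V F /\
  (forall T, In T F -> nondegenerate V T).

Definition path_avoiding (V : nat -> R3) (F : list face) (x y : R3) : Prop :=
  exists g : R -> R3,
    continuity (fun t => px (g t)) /\ continuity (fun t => py (g t)) /\
    continuity (fun t => pz (g t)) /\ g 0 = x /\ g 1 = y /\
    forall t, 0 <= t <= 1 -> ~ on_mesh V F (g t).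

(* x lies in the region enclosed by the mesh: x is off the surface and its
   (path-)component of the complement of the surface is bounded *)
Definition inside (V : nat -> R3) (F : list face) (x : R3) : Prop :=
  ~ on_mesh V F x /\
  exists r, forall y, path_avoiding V F x y -> vnorm y <= r.

Definition sigma_of (V : nat -> R3) (F : list face) (x : R3) (sg : R) : Prop :=
  (inside V F x /\ sg = -1) \/ (~ inside V F x /\ sg = 1).

Definition outward_oriented (V : nat -> R3) (F : list face) : Prop :=
  forall T, In T F -> forall a, is_bary a -> 0 < b1 a -> 0 < b2 a -> 0 < b3 a ->
    exists eps, eps > 0 /\ forall t, 0 < t < eps ->
      ~ inside V F (vadd (bary_point V T a) (vscale t (fnormal V T))) /\
      inside V F (vsub (bary_point V T a) (vscale t (fnormal V T))).

(* i in {0,1,2}; j, k are the other two indices.  The coefficients c1, c2 are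
   the (unique) coordinates of the in-plane part p in the basis e1, e2, written
   via the Gram system. *)
Definition aligned_normal (V N : nat -> R3) (T : face) (sg : R) (i : nat) : R3 :=
  let vi := fpos V T i in
  let e1 := vsub (fpos V T ((i + 1) mod 3)) vi in
  let e2 := vsub (fpos V T ((i + 2) mod 3)) vi in
  let mT := vscale sg (fnormal V T) in
  let mi := vscale sg (N (fvert T i)) in
  let p := vsub mi (vscale (dot mi mT) mT) in
  let g11 := dot e1 e1 in
  let g12 := dot e1 e2 in
  let g22 := dot e2 e2 in
  let det := g11 * g22 - g12 * g12 in
  let c1 := (dot p e1 * g22 - dot p e2 * g12) / det in
  let c2 := (dot p e2 * g11 - dot p e1 * g12) / det in
  let w := vsub (vsub mi (vscale (Rmax 0 c1) e1)) (vscale (Rmax 0 c2) e2) in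
  vscale (/ vnorm w) w.

Definition avec (V N : nat -> R3) (T : face) (sg : R) (i : nat) : R3 :=
  let n := aligned_normal V N T sg i in
  vscale (/ dot n (vscale sg (fnormal V T))) n.

(* x lies in the parallel triangle T' (with l >= 0) with barycentric coords a;
   the projection is then  bary_point V T a. *)
Definition bary_proj (V N : nat -> R3) (T : face) (sg : R) (x : R3) (a : bary3) : Prop :=
  let l := dot (vsub x (fpos V T 0)) (vscale sg (fnormal V T)) in
  0 <= l /\ is_bary a /\
  x = comb3 (vadd (fpos V T 0) (vscale l (avec V N T sg 0)))
            (vadd (fpos V T 1) (vscale l (avec V N T sg 1)))
            (vadd (fpos V T 2) (vscale l (avec V N T sg 2))) a.

Definition is_nearest (V : nat -> R3) (F : list face) (x s : R3) : Prop :=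
  on_mesh V F s /\ forall y, on_mesh V F y -> vnorm (vsub x s) <= vnorm (vsub x y).

Definition survives (V N : nat -> R3) (F : list face) (sg : R) (x st : R3)
  (T : face) (a : bary3) : Prop :=
  In T F /\ in_face V T st /\ bary_proj V N T sg x a.

Definition dispersed_proj (V N : nat -> R3) (F : list face) (x : R3)
  (T : face) (a : bary3) : Prop :=
  exists sg st, sigma_of V F x sg /\ is_nearest V F x st /\
    survives V N F sg x st T a /\
    forall T' a', survives V N F sg x st T' a' ->
      vnorm (vsub x (bary_point V T a)) <= vnorm (vsub x (bary_point V T' a')).

Definition exceptional (V N : nat -> R3) (F : list face) (x : R3) : Prop :=
  exists T sg i j u t, In T F /\ (sg = 1 \/ sg = -1) /\
    (i < 3)%nat /\ (j < 3)%nat /\ i <> j /\ 0 <= u <= 1 /\ 0 <= t /\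
    x = vadd (vadd (vscale (1 - u) (fpos V T i)) (vscale u (fpos V T j)))
             (vscale t (vadd (vscale (1 - u) (avec V N T sg i))
                             (vscale u (avec V N T sg j)))).

Definition surf_rep (V Vc N : nat -> R3) (F : list face) (x : R3) (p : R3 * R) : Prop :=
  exists sg T a, sigma_of V F x sg /\ dispersed_proj V N F x T a /\
    p = (bary_point Vc T a, sg * vnorm (vsub x (bary_point V T a))).

(** A point [x] off the exceptional set projects into the open interior of a
    face: a vanishing barycentric coordinate of [x] in the parallel triangle
    would put [x] on one of the bilinear edge surfaces forming the exceptional
    set.  Open faces of a watertight mesh are pairwise disjoint, and barycentric
    coordinates in a triangle of non-zero area are unique, so [s_c] determines
    the face [T] and the coordinates [a], hence [s].  Finally
    [x = s + l w] with [l >= 0] and [w] the [a]-interpolation of the vectors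
    [a_i^{T,sigma}], and [|h| = l |w|] determines [l w]; if the two points had
    opposite orientations, [h] would vanish for both and both would equal [s]. *)

From Stdlib Require Import Reals List.
From Stdlib Require Import Lra.
Open Scope R_scope.

Definition vzero : R3 := mkR3 0 0 0.

Lemma R3_ext u v : px u = px v -> py u = py v -> pz u = pz v -> u = v.
Proof. destruct u, v; simpl; intros; subst; reflexivity. Qed.

Lemma dot_self_ge0 u : 0 <= dot u u.
Proof. unfold dot; nra. Qed.

Lemma dot_self_pos_of_vnorm u : vnorm u > 0 -> dot u u > 0.
Proof.
  unfold vnorm; intros H.
  destruct (Rle_lt_dec (dot u u) 0) as [Hle|]; auto.
  rewrite sqrt_neg_0 in H; lra.
Qed.

Lemma vnorm_ge0 u : 0 <= vnorm u.
Proof. apply sqrt_pos. Qed.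

Lemma dot_vscale_self a u : dot (vscale a u) (vscale a u) = a * a * dot u u.
Proof. unfold dot, vscale; simpl; ring. Qed.

Lemma vnorm_vscale l u : 0 <= l -> vnorm (vscale l u) = l * vnorm u.
Proof.
  intros Hl; unfold vnorm; rewrite dot_vscale_self.
  rewrite sqrt_mult by (nra || apply dot_self_ge0).
  now rewrite sqrt_square.
Qed.

Lemma vnorm_eq0 u : vnorm u = 0 -> u = vzero.
Proof.
  unfold vnorm; intros H; apply sqrt_eq_0 in H; [|apply dot_self_ge0].
  destruct u as [u1 u2 u3]; unfold dot in H; simpl in H.
  apply R3_ext; simpl; nra.
Qed.

Lemma vsub_vadd_l s v : vsub (vadd s v) s = v.
Proof. apply R3_ext; unfold vsub, vadd; simpl; ring. Qed.

Lemma vscale_eq0 l u : l * vnorm u = 0 -> vscale l u = vzero.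
Proof.
  intros H; apply Rmult_integral in H as [->|H].
  - apply R3_ext; unfold vscale; simpl; ring.
  - rewrite (vnorm_eq0 u H); apply R3_ext; unfold vscale; simpl; ring.
Qed.

Lemma vscale_eq_of_vnorm l l' u :
  l * vnorm u = l' * vnorm u -> vscale l u = vscale l' u.
Proof.
  intros H; destruct (Req_dec (vnorm u) 0) as [Z|Z].
  - rewrite (vnorm_eq0 u Z); apply R3_ext; unfold vscale; simpl; ring.
  - now rewrite (Rmult_eq_reg_r _ _ _ H Z).
Qed.

Lemma cross_lincomb_l a b u v :
  cross (vadd (vscale a u) (vscale b v)) v = vscale a (cross u v).
Proof. apply R3_ext; unfold cross, vadd, vscale; simpl; ring. Qed.

Lemma cross_lincomb_r a b u v :
  cross u (vadd (vscale a u) (vscale b v)) = vscale b (cross u v).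
Proof. apply R3_ext; unfold cross, vadd, vscale; simpl; ring. Qed.

Lemma vscale_eq0_coef a c : dot c c > 0 -> vscale a c = vzero -> a = 0.
Proof.
  intros Hc H.
  assert (Ha : a * a * dot c c = 0).
  { rewrite <- dot_vscale_self, H; unfold dot, vzero; simpl; ring. }
  apply Rmult_integral in Ha as [Ha|]; [|lra].
  apply Rmult_integral in Ha as [|]; auto.
Qed.

Lemma lincomb_eq0 a b u v :
  dot (cross u v) (cross u v) > 0 ->
  vadd (vscale a u) (vscale b v) = vzero -> a = 0 /\ b = 0.
Proof.
  intros Hc H; split; apply (vscale_eq0_coef _ (cross u v) Hc).
  - rewrite <- (cross_lincomb_l a b), H.
    apply R3_ext; unfold cross, vzero; simpl; ring.
  - rewrite <- (cross_lincomb_r a b), H.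
    apply R3_ext; unfold cross, vzero; simpl; ring.
Qed.

Lemma comb3_sub p q r a a' :
  b1 a + b2 a + b3 a = 1 -> b1 a' + b2 a' + b3 a' = 1 ->
  vsub (comb3 p q r a) (comb3 p q r a') =
  vadd (vscale (b2 a - b2 a') (vsub q p)) (vscale (b3 a - b3 a') (vsub r p)).
Proof.
  destruct a as [[a1 a2] a3], a' as [[a1' a2'] a3']; unfold b1, b2, b3; simpl.
  intros Hs Hs'.
  replace a1 with (1 - a2 - a3) by lra; replace a1' with (1 - a2' - a3') by lra.
  apply R3_ext; unfold comb3, vsub, vadd, vscale, b1, b2, b3; simpl; ring.
Qed.

Lemma comb3_inj p q r a a' :
  dot (cross (vsub q p) (vsub r p)) (cross (vsub q p) (vsub r p)) > 0 ->
  is_bary a -> is_bary a' -> comb3 p q r a = comb3 p q r a' -> a = a'.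
Proof.
  intros Hc (_ & _ & _ & Hs) (_ & _ & _ & Hs') E.
  assert (Hz : vadd (vscale (b2 a - b2 a') (vsub q p))
                    (vscale (b3 a - b3 a') (vsub r p)) = vzero).
  { rewrite <- comb3_sub by assumption; rewrite E.
    apply R3_ext; unfold vsub, vzero; simpl; ring. }
  destruct (lincomb_eq0 _ _ _ _ Hc Hz) as [D2 D3].
  destruct a as [[a1 a2] a3], a' as [[a1' a2'] a3']; unfold b1, b2, b3 in *; simpl in *.
  assert (a2 = a2') by lra; assert (a3 = a3') by lra; assert (a1 = a1') by lra.
  now subst.
Qed.

Lemma bary_point_inj W T a a' :
  nondegenerate W T -> is_bary a -> is_bary a' ->
  bary_point W T a = bary_point W T a' -> a = a'.
Proof. intros Hn; apply dot_self_pos_of_vnorm in Hn; now apply comb3_inj. Qed.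

Lemma open_face_not_on_face_missing_vertex W F k1 k2 n a a' :
  no_self_intersection W F -> (forall T, In T F -> nondegenerate W T) ->
  (k1 < length F)%nat -> (k2 < length F)%nat -> k1 <> k2 ->
  has_vertex (nth k1 F (0,0,0)%nat) n = true ->
  has_vertex (nth k2 F (0,0,0)%nat) n = false ->
  is_bary a -> 0 < b1 a -> 0 < b2 a -> 0 < b3 a -> is_bary a' ->
  bary_point W (nth k1 F (0,0,0)%nat) a <> bary_point W (nth k2 F (0,0,0)%nat) a'.
Proof.
  intros Hns Hnd h1 h2 hne Hv1 Hv2 Hb p1 p2 p3 Hb' Heq.
  destruct (Hns k1 k2 h1 h2 hne (bary_point W (nth k1 F (0,0,0)%nat) a))
    as (a'' & Hb'' & Hx & c1 & c2 & c3); [now exists a | now exists a' |].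
  assert (a = a'') as <-.
  { apply (bary_point_inj W (nth k1 F (0,0,0)%nat)); auto.
    apply Hnd, nth_In, h1. }
  unfold has_vertex in Hv1.
  apply Bool.orb_true_iff in Hv1 as [Hv1|Hv1];
    [apply Bool.orb_true_iff in Hv1 as [Hv1|Hv1]|];
    apply PeanoNat.Nat.eqb_eq in Hv1; rewrite Hv1 in *.
  - specialize (c1 Hv2); lra.
  - specialize (c2 Hv2); lra.
  - specialize (c3 Hv2); lra.
Qed.

Lemma watertight_open_face_unique W F T T' a a' :
  watertight W F -> In T F -> In T' F ->
  is_bary a -> 0 < b1 a -> 0 < b2 a -> 0 < b3 a ->
  is_bary a' -> 0 < b1 a' -> 0 < b2 a' -> 0 < b3 a' ->
  bary_point W T a = bary_point W T' a' -> T = T' /\ a = a'.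
Proof.
  intros (_ & Hd & Hns & Hnd) HT HT' Hb p1 p2 p3 Hb' q1 q2 q3 Heq.
  destruct (In_nth F T (0,0,0)%nat HT) as (k1 & h1 & e1).
  destruct (In_nth F T' (0,0,0)%nat HT') as (k2 & h2 & e2).
  destruct (PeanoNat.Nat.eq_dec k1 k2) as [<-|hne].
  - rewrite e1 in e2; subst T'.
    split; [reflexivity | apply (bary_point_inj W T); auto].
  - exfalso; apply (Hd k1 k2 h1 h2 hne); intros n.
    rewrite e1, e2.
    destruct (has_vertex T n) eqn:E1, (has_vertex T' n) eqn:E2; auto.
    + exfalso; revert Heq; rewrite <- e1, <- e2.
      apply (open_face_not_on_face_missing_vertex W F k1 k2 n); rewrite ?e1, ?e2; auto.
    + exfalso; symmetry in Heq; revert Heq; rewrite <- e1, <- e2.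
      apply (open_face_not_on_face_missing_vertex W F k2 k1 n); rewrite ?e1, ?e2; auto.
Qed.

Definition interp_avec (V N : nat -> R3) (T : face) (sg : R) (a : bary3) : R3 :=
  comb3 (avec V N T sg 0) (avec V N T sg 1) (avec V N T sg 2) a.

Lemma bary_proj_ray V N T sg x a : bary_proj V N T sg x a ->
  exists l, 0 <= l /\ x = vadd (bary_point V T a) (vscale l (interp_avec V N T sg a)).
Proof.
  unfold bary_proj; cbv zeta; intros (Hl & _ & Hx).
  exists (dot (vsub x (fpos V T 0)) (vscale sg (fnormal V T))); split; [exact Hl|].
  rewrite Hx at 1; unfold bary_point, interp_avec.
  apply R3_ext; unfold comb3, vadd, vscale; simpl; ring.
Qed.

(* A vanishing coordinate puts [x] on the edge surface opposite that vertex. *)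
Lemma comb3_lift_b1_0 p q r A0 A1 A2 l a : is_bary a -> b1 a = 0 ->
  comb3 (vadd p (vscale l A0)) (vadd q (vscale l A1)) (vadd r (vscale l A2)) a =
  vadd (vadd (vscale (1 - b3 a) q) (vscale (b3 a) r))
       (vscale l (vadd (vscale (1 - b3 a) A1) (vscale (b3 a) A2))).
Proof.
  destruct a as [[a1 a2] a3]; unfold is_bary, b1, b2, b3; simpl.
  intros (_ & _ & _ & Hs) ->; replace a2 with (1 - a3) by lra.
  apply R3_ext; unfold comb3, vadd, vscale, b1, b2, b3; simpl; ring.
Qed.

Lemma comb3_lift_b2_0 p q r A0 A1 A2 l a : is_bary a -> b2 a = 0 ->
  comb3 (vadd p (vscale l A0)) (vadd q (vscale l A1)) (vadd r (vscale l A2)) a =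
  vadd (vadd (vscale (1 - b3 a) p) (vscale (b3 a) r))
       (vscale l (vadd (vscale (1 - b3 a) A0) (vscale (b3 a) A2))).
Proof.
  destruct a as [[a1 a2] a3]; unfold is_bary, b1, b2, b3; simpl.
  intros (_ & _ & _ & Hs) ->; replace a1 with (1 - a3) by lra.
  apply R3_ext; unfold comb3, vadd, vscale, b1, b2, b3; simpl; ring.
Qed.

Lemma comb3_lift_b3_0 p q r A0 A1 A2 l a : is_bary a -> b3 a = 0 ->
  comb3 (vadd p (vscale l A0)) (vadd q (vscale l A1)) (vadd r (vscale l A2)) a =
  vadd (vadd (vscale (1 - b2 a) p) (vscale (b2 a) q))
       (vscale l (vadd (vscale (1 - b2 a) A0) (vscale (b2 a) A1))).
Proof.
  destruct a as [[a1 a2] a3]; unfold is_bary, b1, b2, b3; simpl.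
  intros (_ & _ & _ & Hs) ->; replace a1 with (1 - a2) by lra.
  apply R3_ext; unfold comb3, vadd, vscale, b1, b2, b3; simpl; ring.
Qed.

Lemma bary_proj_interior V N F sg x T a :
  (sg = 1 \/ sg = -1) -> In T F -> bary_proj V N T sg x a ->
  ~ exceptional V N F x -> 0 < b1 a /\ 0 < b2 a /\ 0 < b3 a.
Proof.
  unfold bary_proj; cbv zeta.
  set (l := dot (vsub x (fpos V T 0)) (vscale sg (fnormal V T))).
  intros Hsg HT (Hl & Hb & Hx) Hex.
  pose proof Hb as (h1 & h2 & h3 & hs).
  split; [|split].
  - destruct (Rle_lt_or_eq_dec _ _ h1) as [|E]; auto; exfalso; apply Hex.
    exists T, sg, 1%nat, 2%nat, (b3 a), l.
    repeat split; auto; try lra.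
    rewrite Hx at 1; now apply comb3_lift_b1_0.
  - destruct (Rle_lt_or_eq_dec _ _ h2) as [|E]; auto; exfalso; apply Hex.
    exists T, sg, 0%nat, 2%nat, (b3 a), l.
    repeat split; auto; try lra.
    rewrite Hx at 1; now apply comb3_lift_b2_0.
  - destruct (Rle_lt_or_eq_dec _ _ h3) as [|E]; auto; exfalso; apply Hex.
    exists T, sg, 0%nat, 1%nat, (b2 a), l.
    repeat split; auto; try lra.
    rewrite Hx at 1; now apply comb3_lift_b3_0.
Qed.

Lemma sigma_of_unique W F x s s' : sigma_of W F x s -> sigma_of W F x s' -> s = s'.
Proof. unfold sigma_of; intros [[? ?]|[? ?]] [[? ?]|[? ?]]; subst; tauto || lra. Qed.

Lemma sigma_of_sign W F x s : sigma_of W F x s -> s = 1 \/ s = -1.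
Proof. unfold sigma_of; intros [[? ?]|[? ?]]; auto. Qed.

Lemma surf_rep_spec V Vc N F x p :
  ~ exceptional V N F x -> surf_rep V Vc N F x p ->
  exists sg T a l, (sg = 1 \/ sg = -1) /\ In T F /\
    is_bary a /\ 0 < b1 a /\ 0 < b2 a /\ 0 < b3 a /\ 0 <= l /\
    x = vadd (bary_point V T a) (vscale l (interp_avec V N T sg a)) /\
    p = (bary_point Vc T a, sg * (l * vnorm (interp_avec V N T sg a))).
Proof.
  intros Hex (sg & T & a & Hsg & (sg' & st & Hsg' & _ & (HT & _ & Hproj) & _) & ->).
  rewrite (sigma_of_unique _ _ _ _ _ Hsg' Hsg) in Hproj.
  pose proof (sigma_of_sign _ _ _ _ Hsg) as Hpm.
  destruct (bary_proj_interior V N F sg x T a Hpm HT Hproj Hex) as (p1 & p2 & p3).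
  destruct (bary_proj_ray _ _ _ _ _ _ Hproj) as (l & Hl & Ex).
  assert (Hb : is_bary a) by (destruct Hproj as (_ & ? & _); auto).
  exists sg, T, a, l; repeat (split; [assumption|]).
  rewrite Ex at 1; rewrite vsub_vadd_l, vnorm_vscale by exact Hl; reflexivity.
Qed.

(* The direction [w] depends on the orientation, hence the premise
   [sg = sg' -> w = w']; with opposite orientations equal signed heights force
   both heights to be zero. *)
Lemma vscale_eq_of_signed_heights sg sg' l l' w w' :
  (sg = 1 \/ sg = -1) -> (sg' = 1 \/ sg' = -1) -> 0 <= l -> 0 <= l' ->
  (sg = sg' -> w = w') ->
  sg * (l * vnorm w) = sg' * (l' * vnorm w') -> vscale l w = vscale l' w'.
Proof.
  intros Hsg Hsg' Hl Hl' Hw Hh.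
  pose proof (vnorm_ge0 w) as Nw; pose proof (vnorm_ge0 w') as Nw'.
  destruct (Req_dec sg sg') as [<-|hne].
  - rewrite <- (Hw eq_refl) in *; apply vscale_eq_of_vnorm.
    destruct Hsg; subst; lra.
  - assert (l * vnorm w = 0 /\ l' * vnorm w' = 0) as [Z Z'].
    { destruct Hsg, Hsg'; subst; try lra; split; nra. }
    now rewrite (vscale_eq0 _ _ Z), (vscale_eq0 _ _ Z').
Qed.

Theorem mainTheorem4 (V Vc N : nat -> R3) (F : list face) :
  watertight V F ->
  watertight Vc F ->
  outward_oriented V F ->
  (forall T i, In T F -> (i < 3)%nat -> vnorm (N (fvert T i)) = 1) ->
  (forall T i, In T F -> (i < 3)%nat -> dot (N (fvert T i)) (fnormal V T) > 0) ->
  (* for every x at least one face survives step (4) *)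
  (forall x sg st, sigma_of V F x sg -> is_nearest V F x st ->
     exists T a, survives V N F sg x st T a) ->
  forall x y p,
    ~ exceptional V N F x -> ~ exceptional V N F y ->
    surf_rep V Vc N F x p -> surf_rep V Vc N F y p ->
    x = y.
Proof.
  intros _ WVc _ _ _ _ x y p Hex Hey Hrx Hry.
  destruct (surf_rep_spec _ _ _ _ _ _ Hex Hrx)
    as (sg & T & a & l & Hsg & HT & Hb & p1 & p2 & p3 & Hl & -> & ->).
  destruct (surf_rep_spec _ _ _ _ _ _ Hey Hry)
    as (sg' & T' & a' & l' & Hsg' & HT' & Hb' & q1 & q2 & q3 & Hl' & -> & Hp).
  pose proof (f_equal fst Hp) as Hc; pose proof (f_equal snd Hp) as Hh.
  cbn [fst snd] in Hc, Hh.
  destruct (watertight_open_face_unique Vc F T T' a a' WVc HT HT'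
              Hb p1 p2 p3 Hb' q1 q2 q3 Hc) as [<- <-].
  f_equal; apply (vscale_eq_of_signed_heights sg sg'); auto.
  now intros ->.
Qed.
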